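(* Let $\mathbb{F}$ be a finite field and let $n_x,n_y,m$ be positive integers with $n_x+n_y\le m-2$. Assume that for all positive integers $n_x',n_y',m'$ with $n_x'+n_y'\le m'$ there exists a Zariski open set in $\mathcal{B}^{(h)}(n_x',n_y',m')$ all of whose elements are $\mathbf{y}$-semiregular. Then there is a set $\mathcal{S}\subseteq\mathcal{B}(n_x,n_y,m)$ containing a Zariski open set such that every $B\in\mathcal{S}$ satisfies: the system $B=\mathbf{0}$ has a solution if and only if $1\notin J_{\mathbf{y},\le\tilde d}(B)$, where $$\tilde d=\left\lceil\frac{n_y(n_x+1)}{m-n_x-1}\right\rceil+1.$$
   Context: Variables $\mathbf{x}=(x_1,\dots,x_{n_x})$, $\mathbf{y}=(y_1,\dots,y_{n_y})$. A bilinear polynomial is $f=\mathbf{x}\mathbf{A}\mathbf{y}^{\top}+\mathbf{b}\mathbf{x}^{\top}+\mathbf{c}\mathbf{y}^{\top}+d$ over $\mathbb{F}$; $\mathcal{B}(n_x,n_y,m)$ is the set of length-$m$ sequences of bilinear polynomials (identified with $\mathbb{F}^{m(n_x+1)(n_y+1)}$ via coefficients, with its Zariski topology) and $\mathcal{B}^{(h)}(n_x,n_y,m)$ the homogeneous ones $\mathbf{x}\mathbf{A}\mathbf{y}^\top$. For a homogeneous bilinear sequence $B=(f_1,\dots,f_m)$ in $n_x'$ $\mathbf{x}$-variables and $n_y'$ $\mathbf{y}$-variables and $j\ge2$, $\mathbf{M}_{\mathbf{y},j}(B)$ is the matrix of coefficient vectors of the polynomials $\mathfrak{m}f_i$ with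 $\mathfrak{m}$ a monomial in the $\mathbf{y}$-variables of degree exactly $j-2$; $B$ is $\mathbf{y}$-$d$-regular if $\mathrm{Rank}(\mathbf{M}_{\mathbf{y},j}(B))=m\binom{n_y'+j-3}{j-2}$ for $j=2,\dots,d$; $d_{\mathbf{y},reg}(B)$ is the minimal $d$ with $\mathrm{Rank}(\mathbf{M}_{\mathbf{y},d}(B))=n_x'\binom{n_y'+d-2}{d-1}$; $B$ is $\mathbf{y}$-semiregular if it is $\mathbf{y}$-$d$-regular for every $d<d_{\mathbf{y},reg}(B)$. For $B=(f_1,\dots,f_m)\in\mathcal{B}(n_x,n_y,m)$, $J_{\mathbf{y},\le d}(B)=\{\sum_i g_if_i: g_i\in\mathbb{F}[\mathbf{y}],\ \deg g_i\le d-2\}$. A solution of $B=\mathbf{0}$ is a point of $\mathbb{F}^{n_x}\times\mathbb{F}^{n_y}$ where all $f_i$ vanish. *)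

From HB Require Import structures.
From mathcomp Require Import all_boot all_order all_algebra.
From mathcomp Require Import mpoly.
Set Implicit Arguments. Unset Strict Implicit. Unset Printing Implicit Defensive.
Import Order.TTheory GRing.Theory.
Local Open Scope ring_scope.

Section Defs.
Variable K : fieldType.

(* Zariski topology on K^I (I a finite index type, coordinates = functions
   I -> K): U is open iff it is the complement of the common zero set of
   some family P of polynomials in the coordinates. *)
Definition coord_eval (I : finType) (v : I -> K) : 'I_#|I| -> K :=
  fun k => v (enum_val k).

Definition zariski_open (I : finType) (U : (I -> K) -> Prop) : Prop :=
  exists P : {mpoly K[#|I|]} -> Prop,
    forall v, U v <-> exists2 p, P p & p.@[coord_eval v] != 0.

(* B (k,i,j) is the
   coefficient of x_i*y_j in f_k, with the convention x_0 = y_0 = 1,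
   i.e. B(k,0,0) = d_k, B(k,i+1,0) = (b_k)_i, B(k,0,j+1) = (c_k)_j,
   B(k,i+1,j+1) = (A_k)_{ij}. *)
Definition bilseq (nx ny m : nat) := ('I_m * 'I_nx.+1 * 'I_ny.+1)%type -> K.

Definition xv (nx ny : nat) (i : 'I_nx.+1) : {mpoly K[nx + ny]} :=
  if unlift ord0 i is Some i' then 'X_(lshift ny i') else 1.
Definition yv (nx ny : nat) (j : 'I_ny.+1) : {mpoly K[nx + ny]} :=
  if unlift ord0 j is Some j' then 'X_(rshift nx j') else 1.

Definition bil_poly (nx ny m : nat) (B : bilseq nx ny m) (k : 'I_m)
  : {mpoly K[nx + ny]} :=
  \sum_(i < nx.+1) \sum_(j < ny.+1) B (k, i, j) *: (@xv nx ny i * @yv nx ny j).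

Definition xy_point (nx ny : nat) (x : 'I_nx -> K) (y : 'I_ny -> K)
  : 'I_(nx + ny) -> K :=
  fun t => match split t with inl i => x i | inr j => y j end.

Definition has_solution (nx ny m : nat) (B : bilseq nx ny m) : Prop :=
  exists (x : 'I_nx -> K) (y : 'I_ny -> K),
    forall k, (bil_poly B k).@[xy_point x y] = 0.

Definition y_only (nx ny : nat) (g : {mpoly K[nx + ny]}) : bool :=
  all (fun mm : 'X_{1..nx + ny} => [forall i : 'I_nx, mm (lshift ny i) == 0%N])
      (msupp g).

(* p \in J_{y,<=d}(B) = { sum_i g_i f_i : g_i in K[y], deg g_i <= d-2 }.
   (msize = total degree + 1, and msize 0 = 0.) *)
Definition in_Jy (nx ny m : nat) (d : nat) (B : bilseq nx ny m)
  (p : {mpoly K[nx + ny]}) : Prop :=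
  exists g : 'I_m -> {mpoly K[nx + ny]},
    (forall k, @y_only nx ny (g k) /\ (msize (g k) <= d - 1)%N) /\
    p = \sum_(k < m) g k * bil_poly B k.

Definition hbilseq (nx ny m : nat) := ('I_m * 'I_nx * 'I_ny)%type -> K.

Definition hbil_poly (nx ny m : nat) (B : hbilseq nx ny m) (k : 'I_m)
  : {mpoly K[nx + ny]} :=
  \sum_(a < nx) \sum_(b < ny) B (k, a, b) *: ('X_(lshift ny a) * 'X_(rshift nx b)).

Definition ymono (ny e : nat) := {mm : 'X_{1..ny < e.+1} | mdeg mm == e}.

Definition ylift (nx ny : nat) (mm : 'X_{1..ny}) : 'X_{1..nx + ny} :=
  [multinom (match split i with inl _ => 0%N | inr j => mm j end) | i < nx + ny].

(* M_{y,j}(B): rows = coefficient vectors of mono * f_k, mono a y-monomial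
   of degree j-2; columns indexed by the monomials x_a * y^mu, deg mu = j-1
   (the only monomials that can occur in such products). *)
Definition Mrow (nx ny m j : nat) := ('I_m * ymono ny (j - 2))%type.
Definition Mcol (nx ny m j : nat) := ('I_nx * ymono ny (j - 1))%type.

Definition Mmat (nx ny m : nat) (B : hbilseq nx ny m) (j : nat)
  : 'M[K]_(#|{: Mrow nx ny m j}|, #|{: Mcol nx ny m j}|) :=
  \matrix_(r < #|{: Mrow nx ny m j}|, c < #|{: Mcol nx ny m j}|)
    let rc : Mrow nx ny m j := enum_val r in
    let cc : Mcol nx ny m j := enum_val c in
    ('X_[ylift nx (val rc.2 : 'X_{1..ny})] * hbil_poly B rc.1)
      @_(mnm_add U_(lshift ny cc.1) (ylift nx (val cc.2 : 'X_{1..ny}))).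

Definition rank_My (nx ny m : nat) (B : hbilseq nx ny m) (j : nat) : nat :=
  \rank (Mmat B j).

Definition My_full (nx ny m : nat) (B : hbilseq nx ny m) (d : nat) : Prop :=
  rank_My B d = (nx * 'C(ny + d - 2, d - 1))%N.

Definition y_d_regular (nx ny m : nat) (B : hbilseq nx ny m) (d : nat) : Prop :=
  forall j, (2 <= j <= d)%N -> rank_My B j = (m * 'C(ny + j - 3, j - 2))%N.

(* y-semiregular: y-d-regular for every d < d_{y,reg}(B), where d_{y,reg}(B)
   is the least d >= 2 with My_full B d (if no such d exists, every d
   satisfies d < d_{y,reg}). *)
Definition y_semiregular (nx ny m : nat) (B : hbilseq nx ny m) : Prop :=
  forall d, (2 <= d)%N -> (forall d', (2 <= d' <= d)%N -> ~ My_full B d') ->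
    y_d_regular B d.

End Defs.

Definition ceil_div (a b : nat) : nat := (a + b.-1) %/ b.

Definition dtilde (nx ny m : nat) : nat :=
  (ceil_div (ny * (nx + 1)) (m - nx - 1) + 1)%N.

From HB Require Import structures.
From mathcomp Require Import all_boot all_order all_algebra.
From mathcomp Require Import mpoly.
From mathcomp Require Import zify.
Set Implicit Arguments. Unset Strict Implicit. Unset Printing Implicit Defensive.
Import GRing.Theory.
Local Open Scope ring_scope.

(* Homogenising B with new variables x_0, y_0 gives a generic, hence
   y-semiregular, element of B^(h)(nx+1, ny+1, m).  The choice of d~ makes
   M_{y,d~} have at least as many rows as columns, so semiregularity forces
   M_{y,d} to have full column rank for some d <= d~.  Then x_0 y_0^(d-1) is a
   linear combination of the products y^mu f_k^(h), and setting x_0 = y_0 = 1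
   exhibits 1 in J_{y,<=d~}(B): for generic B both sides of the equivalence
   are false. *)

Lemma in_Jy_one_no_solution (K : fieldType) nx ny m (B : bilseq K nx ny m) d :
  in_Jy d B 1 -> ~ has_solution B.
Proof.
case=> g [_ one_eq] [x [y B_xy]].
have := congr1 (meval (xy_point x y)) one_eq.
rewrite meval1 raddf_sum /= big1 => [/eqP|k _]; first by rewrite oner_eq0.
by rewrite mevalM B_xy mulr0.
Qed.

Lemma in_Jy_le (K : fieldType) nx ny m (B : bilseq K nx ny m) d d' p :
  (d' <= d)%N -> in_Jy d' B p -> in_Jy d B p.
Proof.
move=> le_d'd [g [g_bounds ->]]; exists g; split=> // k.
by have [y_g size_g] := g_bounds k; split=> //; apply: leq_trans size_g _; lia.
Qed.

Lemma leq_ceil_div a b : (0 < b)%N -> (a <= ceil_div a b * b)%N.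
Proof.
move=> b_gt0; rewrite /ceil_div.
have := divn_eq (a + b.-1) b; have := ltn_pmod (a + b.-1) b_gt0; lia.
Qed.

Lemma dtilde_ge2 nx ny m :
  (0 < ny)%N -> (nx + ny + 2 <= m)%N -> (2 <= dtilde nx ny m)%N.
Proof.
move=> ny_gt0 le_m; rewrite /dtilde.
have := @leq_ceil_div (ny * (nx + 1)) (m - nx - 1) (ltac:(lia)).
case: ceil_div; nia.
Qed.

Lemma leq_mul_bin a b n c : (a * (n + c.+1) <= b * c.+1)%N ->
  (a * 'C(n + c.+1, c.+1) <= b * 'C(n + c, c))%N.
Proof.
move=> le_ab; rewrite -(leq_pmul2l (ltn0Sn c)) mulnCA -mul_bin_diag.
have -> : (n + c.+1).-1 = (n + c)%N by lia.
by rewrite mulnA mulnCA mulnA leq_mul.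
Qed.

Lemma dtilde_binomial_bound nx ny m :
  (0 < ny)%N -> (nx + ny + 2 <= m)%N ->
  let d := dtilde nx ny m in
  (nx.+1 * 'C(ny.+1 + d - 2, d - 1) <= m * 'C(ny.+1 + d - 3, d - 2))%N.
Proof.
move=> ny_gt0 le_m; rewrite /dtilde.
have := @leq_ceil_div (ny * (nx + 1)) (m - nx - 1) (ltac:(lia)).
case: ceil_div => [|c] le_c; first nia.
have -> : (ny.+1 + (c.+1 + 1) - 2 = ny + c.+1)%N by lia.
have -> : (ny.+1 + (c.+1 + 1) - 3 = ny + c)%N by lia.
have -> : (c.+1 + 1 - 1 = c.+1)%N by lia.
have -> : (c.+1 + 1 - 2 = c)%N by lia.
apply: leq_mul_bin; nia.
Qed.

Lemma card_ymono n e : (#|{: ymono n.+1 e}| <= 'C(e + n, e))%N.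
Proof.
pose f (mu : ymono n.+1 e) : 'X_{1..n.+1} := bmnm (val mu).
have f_inj : injective f by move=> mu1 mu2 /val_inj /val_inj.
rewrite -(size_basis n e) cardE -(size_map f).
apply: uniq_leq_size; first by rewrite map_inj_uniq ?enum_uniq.
by move=> _ /mapP [[[mu ?] /= deg_mu] _ ->]; rewrite -basis_cover.
Qed.

Section SemiregularFullRank.
Variables (K : fieldType) (nx ny m : nat) (B : hbilseq K nx ny.+1 m).

Lemma card_Mcol j : (2 <= j)%N ->
  (#|{: Mcol nx ny.+1 m j}| <= nx * 'C(ny.+1 + j - 2, j - 1))%N.
Proof.
move=> j_ge2; rewrite card_prod card_ord leq_mul2l; apply/orP; right.
have -> : (ny.+1 + j - 2 = (j - 1) + ny)%N by lia.
exact: card_ymono.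
Qed.

Lemma rank_My_le j : (2 <= j)%N ->
  (rank_My B j <= nx * 'C(ny.+1 + j - 2, j - 1))%N.
Proof. by move=> j_ge2; apply: leq_trans (rank_leq_col _) (card_Mcol j_ge2). Qed.

Lemma My_full_row_full j : (2 <= j)%N -> My_full B j -> row_full (Mmat B j).
Proof.
move=> j_ge2 B_full; rewrite /row_full eqn_leq rank_leq_col /=.
by move: B_full; rewrite /My_full /rank_My => ->; apply: card_Mcol.
Qed.

(* If no M_{y,d'} with d' <= d had full rank, regularity at d would give
   rank = #rows >= #cols, i.e. full rank at d. *)
Lemma y_semiregular_row_full d : (2 <= d)%N ->
  (nx * 'C(ny.+1 + d - 2, d - 1) <= m * 'C(ny.+1 + d - 3, d - 2))%N ->
  y_semiregular B ->
  exists2 d', (2 <= d' <= d)%N & row_full (Mmat B d').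
Proof.
move=> d_ge2 rows_ge_cols B_semireg.
have [/existsP [d' /andP [d'_ge2 /eqP B_full]]|/existsPn no_full] :=
  boolP [exists d' : 'I_d.+1,
           (2 <= d')%N && (rank_My B d' == nx * 'C(ny.+1 + d' - 2, d' - 1))%N].
  by exists d'; [rewrite d'_ge2 -ltnS ltn_ord | exact: My_full_row_full].
have not_full d' : (2 <= d' <= d)%N -> ~ My_full B d'.
  move=> /andP [d'_ge2 le_d'd] B_full.
  have := no_full (Ordinal (le_d'd : (d' < d.+1)%N)).
  by rewrite /= d'_ge2 B_full eqxx.
have B_reg := B_semireg d d_ge2 not_full d.
case: (not_full d); first by rewrite d_ge2 leqnn.
apply/eqP; rewrite eqn_leq rank_My_le //=.
by rewrite B_reg ?d_ge2 ?leqnn.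
Qed.

End SemiregularFullRank.

Lemma split_lshift n1 n2 (a : 'I_n1) : split (lshift n2 a) = inl a.
Proof. exact: (unsplitK (inl a)). Qed.

Lemma split_rshift n1 n2 (b : 'I_n2) : split (rshift n1 b) = inr b.
Proof. exact: (unsplitK (inr b)). Qed.

Lemma mnm_splitP n1 n2 (mu nu : 'X_{1..n1 + n2}) :
  (forall a, mu (lshift n2 a) = nu (lshift n2 a)) ->
  (forall b, mu (rshift n1 b) = nu (rshift n1 b)) -> mu = nu.
Proof.
by move=> eq_l eq_r; apply/mnmP => i; rewrite -(splitK i); case: (split i).
Qed.

Section YMonomials.
Variables n e : nat.

Lemma mdeg_mnm1Mn (i : 'I_n) : mdeg (U_(i) *+ e)%MM = e.
Proof. by rewrite mdegMn mdeg1 mul1n. Qed.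

Definition ymono_pow (i : 'I_n) : ymono n e :=
  exist _ (BMultinom (bound := e.+1) (bmnm := (U_(i) *+ e)%MM)
                      (eq_leq (mdeg_mnm1Mn i)))
        (introT eqP (mdeg_mnm1Mn i)).

Lemma mdeg_mnmDU (mu : ymono n e) (b : 'I_n) :
  mdeg (val (val mu) + U_(b))%MM = e.+1.
Proof. by case: mu => [mu /= /eqP deg_mu]; rewrite mdegD mdeg1 deg_mu addn1. Qed.

Definition ymono_mulU e' (mu : ymono n e) (b : 'I_n) (deg_e' : e.+1 = e') :
    ymono n e' :=
  let deg_mub := etrans (mdeg_mnmDU mu b) deg_e' in
  exist _ (BMultinom (bound := e'.+1) (bmnm := (val (val mu) + U_(b))%MM)
                      (eq_leq deg_mub))
        (introT eqP deg_mub).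

End YMonomials.

Section RowSpace.
Variables (K : fieldType) (nx ny m d : nat) (B : hbilseq K nx ny m).
Hypothesis d_ge2 : (2 <= d)%N.

Lemma succ_deg_row : (d - 2).+1 = (d - 1)%N.
Proof. lia. Qed.

Definition col_mnm (c : Mcol nx ny m d) : 'X_{1..nx + ny} :=
  (U_(lshift ny c.1) + ylift nx (val (val c.2)))%MM.

Definition row_poly (r : Mrow nx ny m d) : {mpoly K[nx + ny]} :=
  'X_[ylift nx (val (val r.2))] * hbil_poly B r.1.

Lemma col_mnm_inj : injective col_mnm.
Proof.
move=> [a [mu deg_mu]] [a' [mu' deg_mu']] /= eq_mnm.
have := congr1 (fun w : 'X_{1..nx + ny} => w (lshift ny a)) eq_mnm.
rewrite /= !mnmDE !mnm1E !mnmE !split_lshift !addn0 !eq_shift eqxx.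
case: eqP => // /= <- _; congr (_, _); apply/val_inj/val_inj/mnmP => b /=.
have := congr1 (fun w : 'X_{1..nx + ny} => w (rshift nx b)) eq_mnm.
by rewrite /= !mnmDE !mnm1E !mnmE !split_rshift !eq_shift !add0n.
Qed.

Lemma mnm_row_poly_term (r : Mrow nx ny m d) a b :
  (ylift nx (val (val r.2)) + (U_(lshift ny a) + U_(rshift nx b)))%MM
  = col_mnm (a, ymono_mulU r.2 b succ_deg_row).
Proof.
apply: mnm_splitP => [a'|b'].
  by rewrite /col_mnm !mnmDE !mnmE !split_lshift /= !eq_shift add0n !addn0.
by rewrite /col_mnm !mnmDE !mnmE !split_rshift /= !eq_shift mnmDE mnm1E addnCA.
Qed.

Lemma row_poly_expand r :
  row_poly r = \sum_(c : Mcol nx ny m d) (row_poly r)@_(col_mnm c) *: 'X_[col_mnm c].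
Proof.
apply/mpolyP => w; rewrite raddf_sum /=.
under eq_bigr do rewrite mcoeffZ mcoeffX.
have [c0 /eqP <-|not_col] := pickP (fun c => col_mnm c == w).
  rewrite (bigD1 c0) //= eqxx mulr1 big1 ?addr0 // => c ne_c.
  by rewrite (inj_eq col_mnm_inj) (negbTE ne_c) mulr0.
rewrite big1 => [|c _]; last by rewrite not_col mulr0.
rewrite /row_poly /hbil_poly mulr_sumr raddf_sum big1 //= => a _.
rewrite mulr_sumr raddf_sum big1 //= => b _.
by rewrite -scalerAr -!mpolyXD mcoeffZ mcoeffX mnm_row_poly_term not_col mulr0.
Qed.

Lemma Mmat_enum_rankE i (c : Mcol nx ny m d) :
  Mmat B d i (enum_rank c) = (row_poly (enum_val i))@_(col_mnm c).
Proof. by rewrite mxE enum_rankK. Qed.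

Lemma row_full_Mmat_span : row_full (Mmat B d) -> forall c,
  exists w : 'I_#|{: Mrow nx ny m d}| -> K,
    \sum_i w i *: row_poly (enum_val i) = 'X_[col_mnm c].
Proof.
case/row_fullP => X mulX c0; pose i0 := enum_rank c0.
exists (X i0).
have coef_comb c : \sum_i X i0 i * (row_poly (enum_val i))@_(col_mnm c) = (c0 == c)%:R.
  move/matrixP: mulX => /(_ i0 (enum_rank c)); rewrite !mxE (inj_eq enum_rank_inj).
  by move=> <-; apply: eq_bigr => i _; rewrite Mmat_enum_rankE.
under eq_bigr do rewrite row_poly_expand scaler_sumr.
rewrite exchange_big /=.
under eq_bigr do under eq_bigr do rewrite scalerA.
under eq_bigr do rewrite -scaler_suml coef_comb.
rewrite (bigD1 c0) //= eqxx scale1r big1 ?addr0 // => c ne_c.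
by rewrite eq_sym (negbTE ne_c) scale0r.
Qed.

End RowSpace.

Section Dehomogenisation.
Variables (K : fieldType) (nx ny : nat).

(* The coefficient array of [B : bilseq K nx ny m] is literally a homogeneous
   sequence in x_0..x_nx, y_0..y_ny; dehomogenising sets x_0 = y_0 = 1. *)
Definition dehom_var (i : 'I_(nx.+1 + ny.+1)) : {mpoly K[nx + ny]} :=
  match split i with inl a => xv K ny a | inr b => yv K nx b end.

Definition dehom (p : {mpoly K[nx.+1 + ny.+1]}) : {mpoly K[nx + ny]} :=
  p \mPo [tuple dehom_var i | i < nx.+1 + ny.+1].

Lemma dehom_mpolyX (mu : 'X_{1..nx.+1 + ny.+1}) :
  dehom 'X_[mu] = \prod_(a < nx.+1) xv K ny a ^+ mu (lshift ny.+1 a) *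
                  \prod_(b < ny.+1) yv K nx b ^+ mu (rshift nx.+1 b).
Proof.
rewrite /dehom comp_mpolyX big_split_ord /=.
by congr (_ * _); apply: eq_bigr => i _;
  rewrite tnth_mktuple /dehom_var ?split_lshift ?split_rshift.
Qed.

Lemma dehom_hbil_poly m (B : bilseq K nx ny m) k :
  dehom (hbil_poly (B : hbilseq K nx.+1 ny.+1 m) k) = bil_poly B k.
Proof.
rewrite /dehom /hbil_poly /bil_poly raddf_sum; apply: eq_bigr => a _.
rewrite raddf_sum; apply: eq_bigr => b _.
rewrite /= comp_mpolyZ comp_mpoly_is_multiplicative !comp_mpolyXU.
by rewrite -!tnth_nth !tnth_mktuple /dehom_var split_lshift split_rshift.
Qed.

Definition ydehom (mu : 'X_{1..ny.+1}) : 'X_{1..nx + ny} :=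
  [multinom match split i with inl _ => 0%N | inr b => mu (lift ord0 b) end
   | i < nx + ny].

Lemma ydehom_lshift mu a : ydehom mu (lshift ny a) = 0%N.
Proof. by rewrite mnmE split_lshift. Qed.

Lemma mdeg_ydehom mu : (mdeg (ydehom mu) <= mdeg mu)%N.
Proof.
rewrite !mdegE big_split_ord /= big1 ?add0n => [|a _]; last by rewrite ydehom_lshift.
rewrite big_ord_recl /= (eq_bigr (fun b => mu (lift ord0 b))) ?leq_addl //.
by move=> b _; rewrite mnmE split_rshift.
Qed.

Lemma dehom_ylift mu : dehom 'X_[ylift nx.+1 mu] = 'X_[ydehom mu].
Proof.
rewrite dehom_mpolyX big1 ?mul1r => [|a _]; last by rewrite mnmE split_lshift expr0.
rewrite mpolyXE_id big_split_ord /= [X in _ = X * _]big1 ?mul1r => [|a _];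
  last by rewrite ydehom_lshift expr0.
rewrite big_ord_recl /yv unlift_none expr1n mul1r; apply: eq_bigr => b _.
by rewrite liftK !mnmE !split_rshift.
Qed.

Lemma y_only_msize_ydehom_sum (I : finType) (P : pred I) (w : I -> K) e
    (mu : I -> ymono ny.+1 e) :
  let g := \sum_(i | P i) w i *: 'X_[ydehom (val (val (mu i)))] in
  y_only g /\ (msize g <= e.+1)%N.
Proof.
move=> g; have supp_g t : t \in msupp g -> exists i, t = ydehom (val (val (mu i))).
  move/msupp_sum_le/flatten_mapP => [i _] /msuppZ_le.
  by rewrite msuppX mem_seq1 => /eqP ->; exists i.
split.
  by apply/allP => t /supp_g [i ->]; apply/forallP => a; rewrite ydehom_lshift.
rewrite msizeE; apply/bigmax_leqP_seq => t /supp_g [i ->] _.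
by have := mdeg_ydehom (val (val (mu i))); case: (mu i) => [nu /= /eqP ->].
Qed.

End Dehomogenisation.

Section OneInJy.
Variables (K : fieldType) (nx ny m d : nat) (B : bilseq K nx ny m).
Hypothesis d_ge2 : (2 <= d)%N.
Local Notation Bh := (B : hbilseq K nx.+1 ny.+1 m).

Lemma dehom_row_span_in_Jy (w : 'I_#|{: Mrow nx.+1 ny.+1 m d}| -> K) :
  in_Jy d B (dehom (\sum_i w i *: row_poly Bh (enum_val i))).
Proof.
exists (fun k => \sum_(i | (enum_val i).1 == k)
          w i *: 'X_[ydehom nx (val (val (enum_val i).2))]); split.
  move=> k; have [y_g size_g] := y_only_msize_ydehom_sum nx
    (fun i => (enum_val i).1 == k) w (fun i => (enum_val i).2).
  by split=> //; apply: leq_trans size_g _; lia.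
rewrite /dehom raddf_sum (partition_big (fun i => (enum_val i).1) xpredT) //=.
apply: eq_bigr => k _; rewrite mulr_suml; apply: eq_bigr => i /eqP <-.
rewrite linearZ /= rmorphM /=.
rewrite -[_ \mPo _]/(dehom _) -[hbil_poly _ _ \mPo _]/(dehom _).
by rewrite dehom_ylift dehom_hbil_poly scalerAl.
Qed.

Definition col_x0y0 : Mcol nx.+1 ny.+1 m d := (ord0, ymono_pow (d - 1) ord0).

Lemma dehom_col_x0y0 : dehom (K := K) 'X_[col_mnm col_x0y0] = 1.
Proof.
rewrite dehom_mpolyX /col_mnm /= !big1 ?mulr1 // => i _; rewrite mnmDE mnm1E mnmE.
  rewrite split_rshift eq_sym mulmnE mnm1E add0n.
  have [->|_] := eqVneq i ord0; last by rewrite mul0n expr0.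
  by rewrite /yv unlift_none expr1n.
rewrite split_lshift addn0 eq_shift.
have [->|_] := eqVneq i ord0; last by rewrite expr0.
by rewrite /xv unlift_none expr1n.
Qed.

Lemma row_full_Mmat_in_Jy_one : row_full (Mmat Bh d) -> in_Jy d B 1.
Proof.
move=> B_full.
have [w span_w] := row_full_Mmat_span d_ge2 B_full col_x0y0.
by rewrite -dehom_col_x0y0 -span_w; apply: dehom_row_span_in_Jy.
Qed.

End OneInJy.

Theorem corollary1
  (F : finFieldType) (K : closedFieldType) (iota : {rmorphism F -> K})
  (K_alg : forall z : K, exists2 p : {poly F}, p != 0 & root (map_poly iota p) z)
  (nx ny m : nat) (Hnx : (0 < nx)%N) (Hny : (0 < ny)%N) (Hm : (0 < m)%N)
  (Hdim : (nx + ny + 2 <= m)%N)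
  (Hsemireg : forall nx' ny' m' : nat,
      (0 < nx')%N -> (0 < ny')%N -> (0 < m')%N -> (nx' + ny' <= m')%N ->
      exists U : hbilseq K nx' ny' m' -> Prop,
        zariski_open U /\ (exists B, U B) /\
        (forall B, U B -> y_semiregular B)) :
  exists S : bilseq K nx ny m -> Prop,
    (exists U : bilseq K nx ny m -> Prop,
        zariski_open U /\ (exists B, U B) /\ (forall B, U B -> S B)) /\
    (forall B, S B ->
       (has_solution B <-> ~ in_Jy (dtilde nx ny m) B 1)).
Proof.
have [U [U_open [U_nonempty U_semireg]]] :=
  Hsemireg nx.+1 ny.+1 m isT isT Hm (ltac:(lia)).
exists U; split; first by exists U.
move=> B /U_semireg B_semireg.
have [d /andP [d_ge2 le_d_dt] B_full] := y_semiregular_row_full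
  (dtilde_ge2 Hny Hdim) (dtilde_binomial_bound Hny Hdim) B_semireg.
have one_in_J := in_Jy_le le_d_dt (row_full_Mmat_in_Jy_one d_ge2 B_full).
split=> [B_sol _ | no_one_in_J]; last by case: (no_one_in_J one_in_J).
exact: in_Jy_one_no_solution one_in_J B_sol.
Qed.
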